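(* Let $n_*>2$ be an integer, $\phi:(n_*,+\infty)\to(1,+\infty)$ strictly increasing, and $\mathsf{G}\in\mathbb{G}(n_*,\phi)$. Then for every $x\in\mathsf{V}$ there exists $N_x\in\mathbb{N}$ such that, for all $N\ge N_x$, every $y\in\mathsf{B}(N,x)=\{y:\rho(x,y)\le N\}$ satisfies $n(y)\le n_*$ or $\phi(n(y))\le 2N$ (i.e. $\max_{y\in\mathsf{B}(N,x)}n(y)\le\phi^{-1}(2N)$).
   Context: $\mathsf{G}=(\mathsf{V},\mathsf{E})$ is a countable, connected, locally finite undirected graph; $n(x)$ is the degree, $\rho$ the path distance. For integer $n_*>2$, $\mathsf{V}_*=\{x:n(x)\le n_*\}$, $\mathsf{V}_*^c=\mathsf{V}\setminus\mathsf{V}_*$. For strictly increasing $\phi:(n_*,+\infty)\to(0,+\infty)$, $\mathbb{G}(n_*,\phi)$ is the family of graphs with $\rho(x,y)\ge\phi[\max\{n(x),n(y)\}]$ for all $x,y\in\mathsf{V}_*^c$. *)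

From Stdlib Require Import Reals List Arith.
Open Scope R_scope.

(* A locally finite simple undirected graph on a vertex type V is given by
   its neighbour lists: [nb x] lists (without repetition) the neighbours of x. *)

(* walk nb x p y : the list p = [z1; ...; zk] describes a walk
   x ~ z1 ~ ... ~ zk = y of length k = length p. *)
Fixpoint walk {V : Type} (nb : V -> list V) (x : V) (p : list V) (y : V) : Prop :=
  match p with
  | nil => x = y
  | z :: q => In z (nb x) /\ walk nb z q y
  end.

Definition is_graph {V : Type} (nb : V -> list V) : Prop :=
  (forall x, NoDup (nb x)) /\
  (forall x y, In y (nb x) -> In x (nb y)) /\
  (forall x, ~ In x (nb x)) /\
  (exists f : V -> nat, forall x y, f x = f y -> x = y) /\
  (forall x y, exists p, walk nb x p y).

Definition deg {V : Type} (nb : V -> list V) (x : V) : nat := length (nb x).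

Definition is_dist {V : Type} (nb : V -> list V) (x y : V) (d : nat) : Prop :=
  (exists p, walk nb x p y /\ length p = d) /\
  (forall p, walk nb x p y -> (d <= length p)%nat).

Definition in_family {V : Type} (nb : V -> list V) (nstar : nat) (phi : R -> R) : Prop :=
  forall x y d, (nstar < deg nb x)%nat -> (nstar < deg nb y)%nat -> x <> y ->
    is_dist nb x y d ->
    phi (INR (Nat.max (deg nb x) (deg nb y))) <= INR d.

(* A vertex of degree above [nstar] within distance [N] of [x] is at distance at most [2 N]
   from any other such vertex, so the separation condition bounds [phi] of its degree by
   [2 N].  Fixing one high-degree vertex [z], it remains to take [N] large enough that [z]
   is itself within distance [N] of [x] and [phi (deg z) <= 2 N]; if there is no high-degree
   vertex at all the statement is trivial. *)
From Stdlib Require Import Reals List Arith Lia Lra Classical.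
Open Scope R_scope.

Section Walks.

Context {V : Type} (nb : V -> list V).

Lemma walk_app p r a b c :
  walk nb a p b -> walk nb b r c -> walk nb a (p ++ r) c.
Proof.
  revert a; induction p as [|z q IH]; intros a Hp Hr; simpl in *.
  - now subst.
  - destruct Hp as [Hz Hq]; split; [exact Hz | exact (IH _ Hq Hr)].
Qed.

Lemma walk_rev :
  (forall x y, In y (nb x) -> In x (nb y)) ->
  forall p a b, walk nb a p b -> exists q, walk nb b q a /\ length q = length p.
Proof.
  intros Hsym; induction p as [|z q IH]; intros a b Hp; simpl in *.
  - now exists nil.
  - destruct Hp as [Hz Hq]; destruct (IH _ _ Hq) as [q' [Hq' Hlen]].
    exists (q' ++ a :: nil); split.
    + apply (walk_app _ _ _ z); [exact Hq' | simpl; split; [apply Hsym, Hz | reflexivity]].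
    + rewrite length_app; simpl; lia.
Qed.

Lemma is_dist_of_walk a b p :
  walk nb a p b -> exists d, is_dist nb a b d /\ (d <= length p)%nat.
Proof.
  remember (length p) as n eqn:Hn; revert p Hn.
  induction n as [n IH] using lt_wf_ind; intros p Hn Hp.
  destruct (classic (exists q, walk nb a q b /\ (length q < n)%nat)) as [[q [Hq Hlt]] | Hmin].
  - destruct (IH _ Hlt q eq_refl Hq) as [d [Hd Hle]]; exists d; split; [exact Hd | lia].
  - exists n; split; [split; [now exists p |] | lia].
    intros q Hq; apply Nat.nlt_ge; intros Hlt; apply Hmin; now exists q.
Qed.

Lemma is_dist_exists : is_graph nb -> forall a b, exists d, is_dist nb a b d.
Proof.
  intros (_ & _ & _ & _ & Hconn) a b.
  destruct (Hconn a b) as [p Hp]; destruct (is_dist_of_walk _ _ _ Hp) as [d [Hd _]].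
  now exists d.
Qed.

Lemma is_dist_triangle {x y z d1 d2 e} :
  is_graph nb -> is_dist nb x y d1 -> is_dist nb x z d2 -> is_dist nb y z e ->
  (e <= d1 + d2)%nat.
Proof.
  intros (_ & Hsym & _) [[p1 [Hp1 <-]] _] [[p2 [Hp2 <-]] _] [_ Hmin].
  destruct (walk_rev Hsym _ _ _ Hp1) as [q [Hq <-]].
  rewrite <- length_app; apply Hmin, (walk_app _ _ _ x); assumption.
Qed.

End Walks.

Lemma phi_le_max (phi : R -> R) (nstar a b : nat) :
  (forall s t, INR nstar < s -> s < t -> phi s < phi t) -> (nstar < a)%nat ->
  phi (INR a) <= phi (INR (Nat.max a b)).
Proof.
  intros Hmono Ha.
  destruct (Nat.max_spec a b) as [[Hlt ->] | [_ ->]]; [| lra].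
  left; apply Hmono; apply lt_INR; lia.
Qed.

Lemma in_family_near_pair {V : Type} (nb : V -> list V) nstar phi x y z d1 d2 N :
  is_graph nb ->
  (forall s t, INR nstar < s -> s < t -> phi s < phi t) ->
  in_family nb nstar phi ->
  is_dist nb x y d1 -> is_dist nb x z d2 -> (d1 <= N)%nat -> (d2 <= N)%nat ->
  (nstar < deg nb y)%nat -> (nstar < deg nb z)%nat -> y <> z ->
  phi (INR (deg nb y)) <= 2 * INR N.
Proof.
  intros HG Hmono Hfam Hy Hz Hy_le Hz_le Hdy Hdz Hyz.
  destruct (is_dist_exists nb HG y z) as [e He].
  assert (He_le : INR e <= 2 * INR N).
  { replace (2 * INR N) with (INR (2 * N)) by (rewrite mult_INR; simpl; ring).
    apply le_INR; pose proof (is_dist_triangle nb HG Hy Hz He); lia. }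
  pose proof (Hfam y z e Hdy Hdz Hyz He).
  pose proof (phi_le_max phi nstar (deg nb y) (deg nb z) Hmono Hdy).
  lra.
Qed.

Theorem lemma5p6 (V : Type) (nb : V -> list V) (nstar : nat) (phi : R -> R) :
  is_graph nb ->
  (2 < nstar)%nat ->
  (forall t, INR nstar < t -> 1 < phi t) ->
  (forall s t, INR nstar < s -> s < t -> phi s < phi t) ->
  in_family nb nstar phi ->
  forall x : V, exists Nx : nat, forall N : nat, (Nx <= N)%nat ->
    forall y d, is_dist nb x y d -> (d <= N)%nat ->
      (deg nb y <= nstar)%nat \/ phi (INR (deg nb y)) <= 2 * INR N.
Proof.
  intros HG _ _ Hmono Hfam x.
  destruct (classic (exists z, (nstar < deg nb z)%nat)) as [[z Hdz] | Hnone].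
  - destruct (is_dist_exists nb HG x z) as [dz Hz].
    destruct (INR_unbounded (phi (INR (deg nb z)))) as [M HM].
    exists (Nat.max dz M); intros N HN y d Hy Hd.
    destruct (le_lt_dec (deg nb y) nstar) as [Hdy | Hdy]; [now left | right].
    destruct (classic (y = z)) as [-> | Hyz].
    + assert (INR M <= INR N) by (apply le_INR; lia).
      pose proof (pos_INR N); lra.
    + apply (in_family_near_pair nb nstar phi x y z d dz N); auto; lia.
  - exists 0%nat; intros N _ y d _ _; left.
    apply Nat.nlt_ge; intros Hdy; apply Hnone; now exists y.
Qed.
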